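(* Let $G=(L\cup R,E)$ be a Tanner graph with girth $g>4$, and let $\mathcal{S}\subset L$ be an $(a,b)$ trapping set. If $\mathcal{S}$ contains a variable node $v$ with $d(v)>b$, then $a\ge d(v)+1-b$.
   Context: A Tanner graph is a bipartite graph $G=(L\cup R,E)$ with variable nodes $L$ and check nodes $R$, without parallel edges; $d(v)$ is the degree of $v$ in $G$, and the girth is the length of a shortest cycle. For $\mathcal{S}\subset L$, $\Gamma(\mathcal{S})$ is the set of neighbors of $\mathcal{S}$ in $R$; the induced subgraph $G(\mathcal{S})$ has node set $\mathcal{S}\cup\Gamma(\mathcal{S})$ and the edges of $G$ between them; $\Gamma_{\mathrm{o}}(\mathcal{S})$ is the set of check nodes in $\Gamma(\mathcal{S})$ of odd degree in $G(\mathcal{S})$. $\mathcal{S}$ is an $(a,b)$ trapping set if $|\mathcal{S}|=a$ and $|\Gamma_{\mathrm{o}}(\mathcal{S})|=b$. *)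

From mathcomp Require Import all_boot.
Set Implicit Arguments. Unset Strict Implicit. Unset Printing Implicit Defensive.

(* A Tanner graph: variable nodes L, check nodes R (finite types), edges given
   by a boolean relation adj : L -> R -> bool (so no parallel edges). *)

Definition tanner_adj (L R : finType) (adj : L -> R -> bool) : rel (L + R)%type :=
  fun x y => match x, y with
             | inl v, inr c => adj v c
             | inr c, inl v => adj v c
             | _, _ => false
             end.

Definition is_graph_cycle (L R : finType) (adj : L -> R -> bool) (s : seq (L + R)%type) : Prop :=
  [/\ 3 <= size s, uniq s & cycle (tanner_adj adj) s].

(* girth > k : every cycle has length > k (vacuous for acyclic graphs, girth = oo) *)
Definition girth_gt (L R : finType) (adj : L -> R -> bool) (k : nat) : Prop :=
  forall s, is_graph_cycle adj s -> k < size s.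

Definition vdeg (L R : finType) (adj : L -> R -> bool) (v : L) : nat :=
  #|[set c | adj v c]|.

Definition nbhd (L R : finType) (adj : L -> R -> bool) (S : {set L}) : {set R} :=
  [set c | [exists v in S, adj v c]].

Definition deg_in (L R : finType) (adj : L -> R -> bool) (S : {set L}) (c : R) : nat :=
  #|[set v in S | adj v c]|.

Definition odd_nbhd (L R : finType) (adj : L -> R -> bool) (S : {set L}) : {set R} :=
  [set c in nbhd adj S | odd (deg_in adj S c)].

Definition trapping_set (L R : finType) (adj : L -> R -> bool) (S : {set L}) (a b : nat) : Prop :=
  #|S| = a /\ #|odd_nbhd adj S| = b.

From mathcomp Require Import all_boot.
From mathcomp Require Import zify.

Set Implicit Arguments.
Unset Strict Implicit.
Unset Printing Implicit Defensive.

(* Every check node adjacent to v outside Gamma_o(S) has even degree in G(S),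
   hence a second neighbour in S; girth > 4 forbids two such checks from
   sharing that neighbour, so these d(v) - b (at least) checks inject into
   S minus v, giving a - 1 >= d(v) - b. *)

Lemma card_le_of_separating_rel (T U : finType) (E : {set T}) (A : {set U})
    (r : T -> U -> bool) :
  (forall x, x \in E -> exists2 u, u \in A & r x u) ->
  (forall u x y, u \in A -> x \in E -> y \in E -> r x u -> r y u -> x = y) ->
  #|E| <= #|A|.
Proof.
move=> hwit hsep.
case: (set_0Vmem E) => [-> | [x0 /hwit [u0 _ _]]]; first by rewrite cards0.
pose f x := odflt u0 [pick u in A | r x u].
have fP x : x \in E -> (f x \in A) && r x (f x).
  move=> /hwit [u uA rxu]; rewrite /f.
  by case: pickP => [w /andP [wA rxw] | /(_ u)]; rewrite ?uA ?rxu ?wA ?rxw.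
have finj : {in E &, injective f}.
  move=> x y xE yE fxy; case/andP: (fP x xE) => fxA rxfx.
  apply: (hsep (f x) x y fxA xE yE rxfx).
  by rewrite fxy; case/andP: (fP y yE).
rewrite -(card_in_imset finj); apply: subset_leq_card.
by apply/subsetP => _ /imsetP [x xE ->]; case/andP: (fP x xE).
Qed.

Section TannerGraph.

Variables (L R : finType) (adj : L -> R -> bool).

Lemma girth_gt4_common_check (u w : L) (c1 c2 : R) :
  girth_gt adj 4 -> u != w ->
  adj u c1 -> adj u c2 -> adj w c1 -> adj w c2 -> c1 = c2.
Proof.
move=> hg uw uc1 uc2 wc1 wc2; apply/eqP/negPn/negP => c12.
have uniq_cycle : uniq [:: inl u; inr c1; inl w; inr c2 : (L + R)%type].
  by rewrite /= !inE /= !(inj_eq (@inl_inj _ _)) !(inj_eq (@inr_inj _ _)) (negbTE uw) c12.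
suff : 4 < 4 by [].
apply: (hg [:: inl u; inr c1; inl w; inr c2]).
by split => //=; rewrite uc1 wc1 wc2 uc2.
Qed.

Definition even_checks (S : {set L}) (v : L) : {set R} :=
  [set c | adj v c && ~~ odd (deg_in adj S c)].

Lemma vdeg_le_even_checks_odd_nbhd (S : {set L}) (v : L) :
  v \in S -> vdeg adj v <= #|even_checks S v| + #|odd_nbhd adj S|.
Proof.
move=> vS; apply: leq_trans (leq_card_setU _ _); apply: subset_leq_card.
apply/subsetP => c; rewrite !inE => vc; rewrite vc /=.
have -> : [exists u in S, adj u c] by apply/existsP; exists v; rewrite vS.
by case: odd.
Qed.

Lemma even_check_other_neighbour (S : {set L}) (v : L) (c : R) :
  v \in S -> c \in even_checks S v -> exists2 u, u \in S :\ v & adj u c.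
Proof.
move=> vS; rewrite inE => /andP [vc even_c].
have vSc : v \in [set u in S | adj u c] by rewrite inE vS.
have : 0 < #|[set u in S | adj u c] :\ v|.
  by move: even_c; rewrite /deg_in (cardsD1 v) vSc; case: #|_|.
by case/card_gt0P => u; rewrite !inE => /and3P [uv uS uc]; exists u; rewrite ?inE ?uv.
Qed.

Lemma card_even_checks_le (S : {set L}) (v : L) :
  girth_gt adj 4 -> v \in S -> #|even_checks S v| <= #|S :\ v|.
Proof.
move=> hg vS; apply: (card_le_of_separating_rel (r := fun c u => adj u c)).
  by move=> c; apply: even_check_other_neighbour.
move=> u c1 c2; rewrite !inE => /andP [uv _] /andP [vc1 _] /andP [vc2 _] uc1 uc2.
exact: girth_gt4_common_check hg uv uc1 uc2 vc1 vc2.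
Qed.

End TannerGraph.

Theorem lemma5 (L R : finType) (adj : L -> R -> bool) (S : {set L}) (a b : nat) (v : L) :
  girth_gt adj 4 ->
  trapping_set adj S a b ->
  v \in S ->
  b < vdeg adj v ->
  vdeg adj v + 1 - b <= a.
Proof.
move=> hg [<- <-] vS _.
have hdeg := vdeg_le_even_checks_odd_nbhd adj vS.
have heven := card_even_checks_le hg vS.
have hS := cardsD1 v S; rewrite vS in hS.
lia.
Qed.
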